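(* Let $T=(P,M,D,O)$ be an operational theory equipped with a convex structure, and suppose $T$ contains a maximally mixed preparation $p^{mix}$. Let $m\in M$ be a perfectly predictable measurement. If $(\Omega,\mu,\xi)$ is a preparation non-contextual ontological representation of $T$ that preserves convexity, then $\xi_m$ is outcome-deterministic: $\xi_m(\lambda)(k)\in\{0,1\}$ for all $\lambda\in\Omega$ and $k\in O^m$.
   Context: An operational theory $T=(P,M,D,O)$ consists of a set $P$ of preparations, a set $M$ of measurements, for each $m\in M$ a finite nonempty set $O^m$ of outcomes (with $O=\bigcup_m O^m$), and for each $(p,m)\in P\times M$ a probability distribution $d_{p,m}:O^m\to[0,1]$; $D=\{d_{p,m}\}$. Statistical equivalence: $p\sim p'$ iff $d_{p,m}=d_{p',m}$ for all $m\in M$; $m\sim m'$ iff $d_{p,m}=d_{p,m'}$ for all $p\in P$; $(m,k)\sim(m',k')$ (for $k\in O^m$, $k'\in O^{m'}$) iff $d_{p,m}(k)=d_{p,m'}(k')$ for all $p\in P$. An ontological representation of $T$ is a triple $(\Omega,\mu,\xi)$ where $\Omega$ is a countable set, $\mu_p$ is a probability distribution on $\Omega$ for each $p\in P$, and for each $m\in M$, $\lambda\in\Omega$, $\xi_m(\lambda)$ is a probability distribution on $O^m$, such that $\sum_{\lambda\in\Omega}\xi_m(\lambda)(k)\mu_p(\lambda)=d_{p,m}(k)$ for all $p,m,k$, and such that for every $\lambda\in\Omega$ there is $p\in P$ with $\mu_p(\lambda)>0$. It is preparation non-contextual if $p\sim p'$ implies $\mu_p=\mu_{p'}$. Convex structure: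 some preparations are designated as (formal) convex combinations $p=\sum_i c_ip_i$ of finitely many preparations $p_i$ with $c_i>0$, $\sum_i c_i=1$, and likewise some measurements are designated as convex combinations $\sum_i c_i m_i$ of measurements with a common outcome set. A representation preserves convexity (Assumption 1) if $\mu_{\sum_i c_ip_i}=\sum_i c_i\mu_{p_i}$ and $\xi_{\sum_i c_im_i}(\lambda)=\sum_i c_i\xi_{m_i}(\lambda)$ for all such designated combinations and all $\lambda$. A measurement $m$ is perfectly predictable if for every $k\in O^m$ there is a preparation $p_k$ with $d_{p_k,m}(k')=\delta_{k,k'}$ for all $k'\in O^m$. A preparation $p^{mix}$ is maximally mixed if (1) for every preparation $p'$, $p^{mix}$ is statistically equivalent to some preparation that is a convex combination (with positive weights) of preparations among which is $p'$; and (2) for every perfectly predictable measurement $m$, $p^{mix}$ is statistically equivalent to some preparation that is a convex combination, with positive weights, of preparations $p_k$ ($k\in O^m$) as in the definition of perfect predictability. *)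

From Stdlib Require Import Reals List.
Import ListNotations.
Open Scope R_scope.

Definition lsum {A : Type} (f : A -> R) (l : list A) : R :=
  fold_right (fun a s => f a + s) 0 l.

(* For nonnegative terms this is the usual (unconditional) series value. *)
Definition has_sum {A : Type} (f : A -> R) (s : R) : Prop :=
  (forall l : list A, NoDup l -> lsum f l <= s) /\
  (forall eps : R, 0 < eps -> exists l : list A, NoDup l /\ s - eps < lsum f l).

(* Operational theory T = (P, M, D, O).  Outcomes live in a common type Out,
   the outcome set O^m of m is the finite nonempty duplicate-free list outs m. *)
Record OpTheory := {
  Prep : Type;
  Meas : Type;
  Out : Type;
  outs : Meas -> list Out;
  outs_nodup : forall m, NoDup (outs m);
  outs_nonempty : forall m, outs m <> [];
  dist : Prep -> Meas -> Out -> R;   (* d_{p,m}(k), meaningful for k in O^m *)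
  dist_range : forall p m k, In k (outs m) -> 0 <= dist p m k <= 1;
  dist_sum : forall p m, lsum (dist p m) (outs m) = 1
}.

Section Defs.
Variable T : OpTheory.

Definition prep_equiv (p p' : Prep T) : Prop :=
  forall m k, In k (outs T m) -> dist T p m k = dist T p' m k.

(* Convex structure: designated formal convex combinations. *)
Record ConvexStructure := {
  convP : Prep T -> list (R * Prep T) -> Prop;  (* convP p [(c_i,p_i)] : p = sum c_i p_i *)
  convM : Meas T -> list (R * Meas T) -> Prop;  (* convM m [(c_i,m_i)] : m = sum c_i m_i *)
  convP_wf : forall p l, convP p l ->
    l <> [] /\ Forall (fun cp => 0 < fst cp) l /\ lsum fst l = 1;
  convM_wf : forall m l, convM m l ->
    l <> [] /\ Forall (fun cm => 0 < fst cm) l /\ lsum fst l = 1 /\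
    Forall (fun cm => forall k, In k (outs T (snd cm)) <-> In k (outs T m)) l
}.

Definition predicts (m : Meas T) (k : Out T) (p : Prep T) : Prop :=
  forall k', In k' (outs T m) ->
    (k' = k -> dist T p m k' = 1) /\ (k' <> k -> dist T p m k' = 0).

Definition perfectly_predictable (m : Meas T) : Prop :=
  forall k, In k (outs T m) -> exists pk, predicts m k pk.

Definition maximally_mixed (C : ConvexStructure) (pmix : Prep T) : Prop :=
  (forall p' : Prep T, exists q l,
      prep_equiv pmix q /\ convP C q l /\ In p' (map snd l)) /\
  (forall m : Meas T, perfectly_predictable m ->
     exists (q : Prep T) (c : Out T -> R) (pk : Out T -> Prep T),
       prep_equiv pmix q /\
       (forall k, In k (outs T m) -> predicts m k (pk k)) /\
       convP C q (map (fun k => (c k, pk k)) (outs T m))).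

Record OntRep := {
  Omega : Type;
  Omega_countable : exists enc : Omega -> nat,
      forall x y, enc x = enc y -> x = y;
  mu : Prep T -> Omega -> R;
  xi : Meas T -> Omega -> Out T -> R;
  mu_nonneg : forall p l, 0 <= mu p l;
  mu_sum : forall p, has_sum (mu p) 1;
  xi_range : forall m l k, In k (outs T m) -> 0 <= xi m l k <= 1;
  xi_sum : forall m l, lsum (xi m l) (outs T m) = 1;
  reproduces : forall p m k, In k (outs T m) ->
      has_sum (fun l => xi m l k * mu p l) (dist T p m k);
  support_covered : forall l, exists p, 0 < mu p l
}.

Definition prep_noncontextual (Rp : OntRep) : Prop :=
  forall p p', prep_equiv p p' -> forall l, mu Rp p l = mu Rp p' l.

Definition preserves_convexity (C : ConvexStructure) (Rp : OntRep) : Prop :=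
  (forall p l, convP C p l -> forall lam,
      mu Rp p lam = lsum (fun cp => fst cp * mu Rp (snd cp) lam) l) /\
  (forall m l, convM C m l -> forall lam k, In k (outs T m) ->
      xi Rp m lam k = lsum (fun cm => fst cm * xi Rp (snd cm) lam k) l).

Definition outcome_deterministic (Rp : OntRep) (m : Meas T) : Prop :=
  forall lam k, In k (outs T m) -> xi Rp m lam k = 0 \/ xi Rp m lam k = 1.

End Defs.

(** If [lam] is in the support of some preparation, it is in the support of
    the maximally mixed one, because [pmix] is (up to equivalence, which
    non-contextuality makes invisible) a convex mixture containing that
    preparation.  Applying the same reasoning to the mixture of the perfect
    predictors [p_k] of [m], [lam] lies in the support of some [p_k0].  Since
    [p_k0] gives probability [0] to every outcome [k <> k0], each [xi m lam k]
    must vanish, and normalisation forces [xi m lam k0 = 1]. *)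
From Stdlib Require Import Reals List Lra Classical.
Import ListNotations.
Open Scope R_scope.

Lemma lsum_nonneg {A : Type} (g : A -> R) (l : list A) :
  (forall x, In x l -> 0 <= g x) -> 0 <= lsum g l.
Proof.
  induction l as [|a l IH]; simpl; intros Hn; [lra|].
  assert (0 <= g a) by auto.
  assert (0 <= lsum g l) by auto.
  lra.
Qed.

Lemma lsum_ge_term {A : Type} (g : A -> R) (l : list A) (x : A) :
  (forall y, In y l -> 0 <= g y) -> In x l -> g x <= lsum g l.
Proof.
  induction l as [|a l IH]; simpl; intros Hn Hx; [contradiction|].
  destruct Hx as [<-|Hx].
  - assert (0 <= lsum g l) by (apply lsum_nonneg; auto). lra.
  - assert (0 <= g a) by auto.
    assert (g x <= lsum g l) by auto.
    lra.
Qed.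

Lemma lsum_pos_exists {A : Type} (g : A -> R) (l : list A) :
  0 < lsum g l -> exists x, In x l /\ 0 < g x.
Proof.
  induction l as [|a l IH]; simpl; intros H; [lra|].
  destruct (Rlt_or_le 0 (g a)) as [Ha|Ha].
  - exists a; auto.
  - destruct IH as [x [Hx Hg]]; [lra|]. exists x; auto.
Qed.

Lemma lsum_eq0 {A : Type} (f : A -> R) (l : list A) :
  (forall k, In k l -> f k = 0) -> lsum f l = 0.
Proof.
  induction l as [|a l IH]; simpl; intros Hz; [reflexivity|].
  rewrite Hz, IH; auto. lra.
Qed.

Lemma lsum_single {A : Type} (f : A -> R) (l : list A) (k0 : A) :
  NoDup l -> In k0 l -> (forall k, In k l -> k <> k0 -> f k = 0) ->
  lsum f l = f k0.
Proof.
  induction l as [|a l IH]; simpl; intros Hnd Hin Hz; [contradiction|].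
  inversion Hnd as [|? ? Hna Hnd']; subst.
  destruct Hin as [<-|Hin].
  - rewrite lsum_eq0; [lra|].
    intros k Hk. apply Hz; simpl; auto. intros ->. contradiction.
  - rewrite Hz, IH; simpl; auto; [lra|]. intros ->. contradiction.
Qed.

Lemma has_sum_ge_term {A : Type} (f : A -> R) (s : R) (x : A) :
  has_sum f s -> f x <= s.
Proof.
  intros [Hub _].
  specialize (Hub [x] (NoDup_cons _ (in_nil (a:=x)) (NoDup_nil _))).
  simpl in Hub. lra.
Qed.

Section Representation.
Variable T : OpTheory.
Variable Rp : OntRep T.

Lemma predicts_xi_eq0 (m : Meas T) (k0 : Out T) (p : Prep T) (lam : Omega T Rp) :
  predicts T m k0 p -> 0 < mu T Rp p lam ->
  forall k, In k (outs T m) -> k <> k0 -> xi T Rp m lam k = 0.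
Proof.
  intros Hpred Hmu k Hk Hne.
  pose proof (has_sum_ge_term _ _ lam (reproduces T Rp p m k Hk)) as Hle.
  rewrite (proj2 (Hpred k Hk) Hne) in Hle.
  pose proof (xi_range T Rp m lam k Hk).
  nra.
Qed.

Lemma xi_eq1_of_eq0 (m : Meas T) (k0 : Out T) (lam : Omega T Rp) :
  In k0 (outs T m) ->
  (forall k, In k (outs T m) -> k <> k0 -> xi T Rp m lam k = 0) ->
  xi T Rp m lam k0 = 1.
Proof.
  intros Hk0 Hz.
  rewrite <- (lsum_single (xi T Rp m lam) (outs T m) k0); auto.
  - apply xi_sum.
  - apply outs_nodup.
Qed.

Variable C : ConvexStructure T.
Hypothesis Hnc : prep_noncontextual T Rp.
Hypothesis Hconv : preserves_convexity T C Rp.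

Lemma mu_mixture_pos (q : Prep T) (l : list (R * Prep T)) (p : Prep T)
    (lam : Omega T Rp) :
  convP T C q l -> In p (map snd l) -> 0 < mu T Rp p lam -> 0 < mu T Rp q lam.
Proof.
  intros Hc Hin Hp.
  rewrite (proj1 Hconv _ _ Hc lam).
  destruct (convP_wf T C _ _ Hc) as [_ [Hw _]].
  rewrite Forall_forall in Hw.
  apply in_map_iff in Hin as [x [<- Hx]].
  eapply Rlt_le_trans; [| apply (lsum_ge_term _ _ x); auto].
  - simpl. apply Rmult_lt_0_compat; auto.
  - intros y Hy. pose proof (Hw y Hy). pose proof (mu_nonneg T Rp (snd y) lam).
    nra.
Qed.

Lemma mu_mixture_component_pos (q : Prep T) (l : list (R * Prep T))
    (lam : Omega T Rp) :
  convP T C q l -> 0 < mu T Rp q lam ->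
  exists cp, In cp l /\ 0 < mu T Rp (snd cp) lam.
Proof.
  intros Hc Hq.
  rewrite (proj1 Hconv _ _ Hc lam) in Hq.
  destruct (lsum_pos_exists _ _ Hq) as [[c p] [Hx Hg]].
  exists (c, p). split; auto. simpl in *.
  destruct (Rle_lt_or_eq_dec _ _ (mu_nonneg T Rp p lam)) as [Hlt|Heq]; auto.
  rewrite <- Heq in Hg. lra.
Qed.

Lemma maximally_mixed_supp (pmix : Prep T) (lam : Omega T Rp) :
  maximally_mixed T C pmix -> 0 < mu T Rp pmix lam.
Proof.
  intros [Hall _].
  destruct (support_covered T Rp lam) as [p Hp].
  destruct (Hall p) as [q [l [Heq [Hc Hin]]]].
  rewrite (Hnc _ _ Heq lam).
  exact (mu_mixture_pos q l p lam Hc Hin Hp).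
Qed.

Lemma maximally_mixed_predictor_supp (pmix : Prep T) (m : Meas T)
    (lam : Omega T Rp) :
  maximally_mixed T C pmix -> perfectly_predictable T m ->
  exists k0 p, In k0 (outs T m) /\ predicts T m k0 p /\ 0 < mu T Rp p lam.
Proof.
  intros Hmix Hm.
  pose proof (maximally_mixed_supp pmix lam Hmix) as Hpos.
  destruct (proj2 Hmix m Hm) as [q [c [pk [Heq [Hpred Hc]]]]].
  rewrite (Hnc _ _ Heq lam) in Hpos.
  destruct (mu_mixture_component_pos _ _ lam Hc Hpos) as [x [Hx Hmu]].
  apply in_map_iff in Hx as [k0 [<- Hk0]].
  exists k0, (pk k0). auto.
Qed.

End Representation.

Theorem mainTheorem1 (T : OpTheory) (C : ConvexStructure T) (pmix : Prep T)
  (Hmix : maximally_mixed T C pmix)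
  (m : Meas T) (Hm : perfectly_predictable T m)
  (Rp : OntRep T)
  (Hnc : prep_noncontextual T Rp)
  (Hconv : preserves_convexity T C Rp) :
  outcome_deterministic T Rp m.
Proof.
  intros lam k Hk.
  destruct (maximally_mixed_predictor_supp T Rp C Hnc Hconv pmix m lam Hmix Hm)
    as [k0 [p [Hk0 [Hpred Hmu]]]].
  pose proof (predicts_xi_eq0 T Rp m k0 p lam Hpred Hmu) as Hzero.
  destruct (classic (k = k0)) as [->|Hne].
  - right. exact (xi_eq1_of_eq0 T Rp m k0 lam Hk0 Hzero).
  - left. exact (Hzero k Hk Hne).
Qed.
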